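(* Let $\Sigma$ be an alphabet with at least three letters. If $f$ and $g$ are unary congruence preserving functions $\mathcal{T}(\Sigma)\to\mathcal{T}(\Sigma)$ such that $f(a)=g(a)$ for all $a\in\Sigma$, then $f(t)=g(t)$ for all $t\in\mathcal{T}(\Sigma)$.
   Context: Let $\Sigma$ be an alphabet not containing $0,1$. A binary tree over $\Sigma$ is a finite set $t \subseteq \{0,1\}^*\Sigma$ such that for any $ua, vb \in t$ with $ua \neq vb$, $u$ is not a prefix of $v$ and $v$ is not a prefix of $u$; $\mathcal{T}(\Sigma)$ is the set of such trees, $\mathbf 0=\emptyset$, each letter $a$ is identified with $\{a\}$, and $t\star t' = 0.t\cup 1.t'$. A congruence is an equivalence relation on $\mathcal{T}(\Sigma)$ compatible with $\star$. A function $f\colon\mathcal{T}(\Sigma)\to\mathcal{T}(\Sigma)$ is congruence preserving if for every congruence $\sim$, $t\sim t'$ implies $f(t)\sim f(t')$. *)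

From mathcomp Require Import all_boot.
From mathcomp Require Import finmap.
Set Implicit Arguments. Unset Strict Implicit. Unset Printing Implicit Defensive.
Local Open Scope fset_scope.

(* A word u a with u in {0,1}^* and a in Sigma is encoded as the pair (u, a);
   0 is encoded by false, 1 by true. *)
Definition word (S : finType) := (seq bool * S)%type.

Definition is_tree (S : finType) (t : {fset word S}) : bool :=
  all (fun x => all (fun y => (x != y) ==>
         (~~ prefix x.1 y.1 && ~~ prefix y.1 x.1)) (enum_fset t)) (enum_fset t).

Record tree (S : finType) := Tree { tval :> {fset word S}; tvalP : is_tree tval }.

Lemma is_treeP (S : finType) (t : {fset word S}) :
  reflect (forall x y, x \in t -> y \in t -> x != y ->
             ~~ prefix x.1 y.1 && ~~ prefix y.1 x.1) (is_tree t).
Proof.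
apply: (iffP allP) => [H x y xt yt nxy | H x xt].
  by have /allP /(_ y yt) := H x xt; rewrite nxy.
by apply/allP => y yt; apply/implyP; apply: H.
Qed.

Lemma is_tree0 (S : finType) : is_tree (fset0 : {fset word S}).
Proof. by apply/is_treeP => x y; rewrite in_fset0. Qed.
Definition tree0 (S : finType) : tree S := Tree (is_tree0 S).

Lemma is_tree_leaf (S : finType) (a : S) : is_tree [fset (([::] : seq bool), a)].
Proof. by apply/is_treeP => x y; rewrite !inE => /eqP-> /eqP->; rewrite eqxx. Qed.
Definition leaf (S : finType) (a : S) : tree S := Tree (is_tree_leaf a).

Definition pre (S : finType) (b : bool) (t : {fset word S}) : {fset word S} :=
  [fset ((b :: w.1), w.2) | w in t].

Lemma is_tree_star (S : finType) (t t' : tree S) :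
  is_tree (pre false t `|` pre true t').
Proof.
have key b (u : tree S) x y : x \in pre b u -> y \in pre b u -> x != y ->
    ~~ prefix x.1 y.1 && ~~ prefix y.1 x.1.
  move=> /imfsetP [[u1 a1] xu ->] /imfsetP [[u2 a2] yu ->] /= nxy.
  rewrite /= ?eqxx /=.
  have /is_treeP Hu := tvalP u; apply: (Hu (u1, a1) (u2, a2) xu yu).
  by apply: contraNneq nxy => -[-> ->].
have cross x y : x \in pre false t -> y \in pre true t' ->
    ~~ prefix x.1 y.1 && ~~ prefix y.1 x.1.
  by move=> /imfsetP [[u1 a1] _ ->] /imfsetP [[u2 a2] _ ->].
apply/is_treeP => x y; rewrite !inE => /orP[xt|xt] /orP[yt|yt] nxy.
- exact: key xt yt nxy.
- exact: cross.
- by rewrite andbC; apply: cross.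
- exact: key xt yt nxy.
Qed.
Definition star (S : finType) (t t' : tree S) : tree S := Tree (is_tree_star t t').

Definition congruence (S : finType) (R : tree S -> tree S -> Prop) : Prop :=
  [/\ (forall t, R t t),
      (forall t t', R t t' -> R t' t),
      (forall t1 t2 t3, R t1 t2 -> R t2 t3 -> R t1 t3) &
      (forall t1 t1' t2 t2', R t1 t1' -> R t2 t2' -> R (star t1 t2) (star t1' t2'))].

Definition cong_preserving (S : finType) (f : tree S -> tree S) : Prop :=
  forall R : tree S -> tree S -> Prop, congruence R ->
    forall t t', R t t' -> R (f t) (f t').

From Pilot Require Import Defs.
From mathcomp Require Import all_boot.
From mathcomp Require Import finmap.
From HB Require Import structures.
From mathcomp Require Import zify.
Set Implicit Arguments. Unset Strict Implicit. Unset Printing Implicit Defensive.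
Local Open Scope fset_scope.

(* Trees are encoded injectively as terms built from letters, [Zero] and
   [Node], normalised by [Node Zero Zero = Zero] (as [star 0 0 = 0]).
   Evaluating terms in a term algebra with [op z z = z], where [z] interprets
   [Zero], yields a congruence on trees.  Given a term [T] that is not a letter
   and a letter [c], one can choose such an [op], injective and with [c] as its
   only leaf value, under which [T] evaluates to [c]; in that congruence [t] is
   equivalent to [c], so [f t] and [g t] are equivalent via [f c = g c].  Two
   such congruences for distinct letters jointly separate normal terms, hence
   [f t = g t]. *)

Inductive term (S : Type) := Leaf of S | Zero | Node of term S & term S.
Arguments Zero {S}.

Fixpoint term_eq (S : eqType) (x y : term S) : bool :=
  match x, y with
  | Leaf a, Leaf b => a == b
  | Zero, Zero => true
  | Node x1 x2, Node y1 y2 => term_eq x1 y1 && term_eq x2 y2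
  | _, _ => false
  end.

Lemma term_eqP (S : eqType) : Equality.axiom (@term_eq S).
Proof.
elim=> [a||x1 IH1 x2 IH2] [b||y1 y2] /=; try by constructor.
  by apply: (iffP eqP) => [->|[]].
by apply: (iffP andP) => [[/IH1 -> /IH2 ->]|[<- <-]]; split; [apply/IH1|apply/IH2].
Qed.
HB.instance Definition _ (S : eqType) := hasDecEq.Build (term S) (@term_eqP S).

Definition injective2 (T : Type) (op : T -> T -> T) :=
  forall p q p' q', op p q = op p' q' -> p = p' /\ q = q'.

Section Terms.
Variable S : Type.
Implicit Types (x y p q z : term S) (op : term S -> term S -> term S).

Definition is_leaf x := if x is Leaf _ then true else false.
Definition is_zero x := if x is Zero then true else false.

Definition node p q := if is_zero p && is_zero q then Zero else Node p q.

Fixpoint normal x :=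
  if x is Node p q then [&& ~~ (is_zero p && is_zero q), normal p & normal q] else true.

Fixpoint tsize x := if x is Node p q then (tsize p + tsize q).+1 else 1.

Fixpoint interp z op x :=
  match x with Leaf e => Leaf e | Zero => z | Node p q => op (interp z op p) (interp z op q) end.

Definition monochrome (c : S) op := forall p q e, op p q = Leaf e -> e = c.

Lemma is_zeroP x : is_zero x -> x = Zero.
Proof. by case: x. Qed.

Lemma normal_node p q : normal p -> normal q -> normal (node p q).
Proof. by rewrite /node; case: ifP => //= -> -> ->. Qed.

Lemma node_inj : injective2 node.
Proof.
move=> p q p' q'; rewrite /node.
case: ifP => [/andP[/is_zeroP -> /is_zeroP ->]|_];
  case: ifP => [/andP[/is_zeroP -> /is_zeroP ->]|_] //.
by case=> -> ->.
Qed.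

Lemma node_neq_leaf p q e : node p q <> Leaf e.
Proof. by rewrite /node; case: ifP. Qed.

Lemma interp_node z op p q : op z z = z ->
  interp z op (node p q) = op (interp z op p) (interp z op q).
Proof. by move=> idem; rewrite /node; case: ifP => // /andP[/is_zeroP -> /is_zeroP ->]. Qed.

Lemma interp_nonleaf_colour (c : S) z op x e : op z z = z -> monochrome c op ->
  ~~ is_leaf x -> interp z op x = Leaf e -> e = c.
Proof. by move=> idem mono; case: x => //= [_|p q _]; [rewrite -idem|]; apply: mono. Qed.

End Terms.

Section JointSeparation.
Variables (S : eqType) (a b : S) (z1 z2 : term S) (op1 op2 : term S -> term S -> term S).
Hypotheses (ab : a != b) (idem1 : op1 z1 z1 = z1) (idem2 : op2 z2 z2 = z2).
Hypotheses (inj1 : injective2 op1) (inj2 : injective2 op2).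
Hypotheses (mono1 : monochrome a op1) (mono2 : monochrome b op2).

Lemma interp_leaf_joint y e :
  interp z1 op1 y = Leaf e -> interp z2 op2 y = Leaf e -> y = Leaf e.
Proof.
case: (boolP (is_leaf y)) => [|nly E1 E2]; first by case: y => //= ? ->.
have ea := interp_nonleaf_colour idem1 mono1 nly E1.
have eb := interp_nonleaf_colour idem2 mono2 nly E2.
by move: ab; rewrite -ea eb eqxx.
Qed.

Lemma interp_zero_joint y : normal y ->
  interp z1 op1 y = z1 -> interp z2 op2 y = z2 -> y = Zero.
Proof.
elim: y => [e||p IHp q IHq] //= => [_ E1 E2|].
  by have := interp_leaf_joint (y := Zero) (esym E1) (esym E2).
move=> /and3P[nz np nq] E1 E2.
have [E1p E1q] := inj1 (etrans E1 (esym idem1)).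
have [E2p E2q] := inj2 (etrans E2 (esym idem2)).
by rewrite (IHp np E1p E2p) (IHq nq E1q E2q) in nz.
Qed.

Lemma interp_joint_inj x y : normal x -> normal y ->
  interp z1 op1 x = interp z1 op1 y -> interp z2 op2 x = interp z2 op2 y -> x = y.
Proof.
elim: x y => [e||p IHp q IHq] y nx ny E1 E2.
- by rewrite (interp_leaf_joint (esym E1) (esym E2)).
- by rewrite (interp_zero_joint ny (esym E1) (esym E2)).
case: y ny E1 E2 => [e||p' q'] ny E1 E2.
- exact: interp_leaf_joint.
- exact: interp_zero_joint.
move: nx ny E1 E2 => /and3P[_ np nq] /and3P[_ np' nq'] /inj1[E1p E1q] /inj2[E2p E2q].
by rewrite (IHp p' np np' E1p E2p) (IHq q' nq nq' E1q E2q).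
Qed.

End JointSeparation.

Section Markings.
Variables (S : eqType) (c : S).
Implicit Types (x p q T : term S).

Definition collapse_op p q := if (p == Leaf c) && (q == Leaf c) then Leaf c else Node p q.

Lemma collapse_op_inj : injective2 collapse_op.
Proof.
move=> p q p' q'; rewrite /collapse_op.
case: ifP => [/andP[/eqP-> /eqP->]|_]; case: ifP => [/andP[/eqP-> /eqP->]|_] //.
by case=> -> ->.
Qed.

Lemma collapse_op_mono : monochrome c collapse_op.
Proof. by move=> p q e; rewrite /collapse_op; case: ifP => // _ [->]. Qed.

Definition mark_op T p q := if node p q == T then Leaf c else node p q.

Lemma mark_op_inj T : injective2 (mark_op T).
Proof.
move=> p q p' q'; rewrite /mark_op.
case: eqP => [E|_]; case: eqP => [E'|_] H.
- by apply: node_inj; rewrite E E'.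
- by case: (node_neq_leaf (esym H)).
- by case: (node_neq_leaf H).
- exact: node_inj.
Qed.

Lemma mark_op_mono T : monochrome c (mark_op T).
Proof.
by move=> p q e; rewrite /mark_op; case: ifP => [_ [->] // | _ E]; case: (node_neq_leaf E).
Qed.

Lemma interp_mark_op_small T x : normal x -> tsize x < tsize T ->
  interp Zero (mark_op T) x = x.
Proof.
elim: x => [e||p IHp q IHq] //= /and3P[nz np nq] small.
have [sp sq] : tsize p < tsize T /\ tsize q < tsize T by lia.
rewrite IHp // IHq // /mark_op /node (negbTE nz).
by case: eqP => // E; rewrite -E /= ltnn in small.
Qed.

Lemma exists_marking T : normal T -> ~~ is_leaf T ->
  exists z op, [/\ op z z = z, injective2 op, monochrome c op & interp z op T = Leaf c].
Proof.
case: T => [//||P Q] nT _.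
  exists (Leaf c), collapse_op.
  by split; [rewrite /collapse_op eqxx | exact: collapse_op_inj | exact: collapse_op_mono |].
exists Zero, (mark_op (Node P Q)); split.
- by [].
- exact: mark_op_inj.
- exact: mark_op_mono.
move: nT => /= /and3P[nz nP nQ].
have [sP sQ] : tsize P < tsize (Node P Q) /\ tsize Q < tsize (Node P Q) by rewrite /=; lia.
by rewrite /= !interp_mark_op_small // /mark_op /node (negbTE nz) eqxx.
Qed.

End Markings.

Section Encoding.
Variable S : finType.
Implicit Types (u v : {fset word S}) (t : tree S).

Definition branch (b : bool) u : {fset word S} :=
  [fset (behead w.1, w.2) | w in u & head (~~ b) w.1 == b].

Lemma mem_branch b u x e : ((x, e) \in branch b u) = ((b :: x, e) \in u).
Proof.
apply/imfsetP/idP => [[[[|c y] e'] /=]|h].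
- by rewrite !inE /= => /andP[_]; case: b.
- by rewrite !inE /= => /andP[wu /eqP hb] [-> ->]; rewrite -hb.
- by exists (b :: x, e) => //=; rewrite !inE h /= eqxx.
Qed.

Lemma mem_pre b u x e :
  ((x, e) \in pre b u) = if x is c :: y then (c == b) && ((y, e) \in u) else false.
Proof.
apply/imfsetP/idP => [[[y e'] /= hy [-> ->]]|]; first by rewrite eqxx.
by case: x => // c y /andP[/eqP -> h]; exists (y, e).
Qed.

Lemma branch_star b t t' : branch b (star t t') = if b then t' else t.
Proof.
by apply/fsetP => -[x e]; rewrite mem_branch /= in_fsetU !mem_pre; case: b; rewrite ?orbF.
Qed.

Lemma pre_branch u : (forall e, ([::], e) \notin u) ->
  u = pre false (branch false u) `|` pre true (branch true u).
Proof.
move=> nroot; apply/fsetP => -[[|c y] e]; rewrite in_fsetU !mem_pre.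
  exact/negbTE/nroot.
by case: c; rewrite !mem_branch /= ?orbF.
Qed.

Lemma is_tree_branch b u : is_tree u -> is_tree (branch b u).
Proof.
move=> /is_treeP tu; apply/is_treeP => -[x e] [y e']; rewrite !mem_branch => hx hy nxy.
have := tu _ _ hx hy; rewrite /= eqxx /=; apply.
by apply: contraNneq nxy => -[-> ->].
Qed.

Lemma tree_root u e : is_tree u -> ([::], e) \in u -> u = [fset ([::], e)].
Proof.
move=> /is_treeP tu he; apply/fsetP => w; rewrite inE; apply/idP/eqP => [wu|->//].
apply/eqP; apply: contraT => nw.
by have := tu _ _ he wu; rewrite eq_sym nw /= prefix0s => /(_ isT).
Qed.

Definition bounded n u := forall w, w \in u -> size w.1 < n.

Lemma bounded0 u : bounded 0 u -> u = fset0.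
Proof. by move=> bu; apply/fsetP => w; rewrite inE; apply/negbTE/negP => /bu. Qed.

Lemma bounded_branch n b u : bounded n.+1 u -> bounded n (branch b u).
Proof. by move=> bu [x e]; rewrite mem_branch => /bu. Qed.

Lemma bounded_leq n m u : n <= m -> bounded n u -> bounded m u.
Proof. by move=> nm bu w /bu /leq_trans; apply. Qed.

Definition depth u := \max_(w <- u) (size w.1).+1.

Lemma bounded_depth u : bounded (depth u) u.
Proof. by move=> w wu; apply: (leq_bigmax_seq (r := enum_fset u)). Qed.

Definition root_letter u := [pick e : S | ([::], e) \in u].

Fixpoint enc n u : term S :=
  if n is n'.+1 then
    if root_letter u is Some e then Leaf e
    else node (enc n' (branch false u)) (enc n' (branch true u))
  else Zero.

Lemma enc_fset0 n : enc n fset0 = Zero.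
Proof.
have branch0 b : branch b fset0 = fset0 by apply/fsetP => -[x e]; rewrite mem_branch !inE.
elim: n => //= n IH; rewrite /root_letter !branch0 IH.
by case: pickP => // e; rewrite inE.
Qed.

Lemma enc_stable n m u : bounded n u -> n <= m -> enc m u = enc n u.
Proof.
elim: n u m => [|n IH] u m; first by move=> /bounded0 ->; rewrite enc_fset0.
by case: m => // m bu nm /=; rewrite !IH //; apply: bounded_branch.
Qed.

Lemma normal_enc n u : normal (enc n u).
Proof. by elim: n u => //= n IH u; case: (root_letter u) => //; apply: normal_node. Qed.

Lemma enc_inj n u v : is_tree u -> is_tree v -> bounded n u -> bounded n v ->
  enc n u = enc n v -> u = v.
Proof.
elim: n u v => [|n IH] u v tu tv bu bv; first by rewrite (bounded0 bu) (bounded0 bv).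
rewrite /= /root_letter; case: pickP => [e ue|nu]; case: pickP => [e' ve'|nv].
- by case=> E; rewrite (tree_root tu ue) (tree_root tv ve') E.
- by move=> E; case: (node_neq_leaf (esym E)).
- by move=> E; case: (node_neq_leaf E).
move=> /node_inj[E0 E1].
rewrite (pre_branch (fun e => negbT (nu e))) (pre_branch (fun e => negbT (nv e))).
by congr (pre _ _ `|` pre _ _); apply: IH; rewrite ?is_tree_branch //; apply: bounded_branch.
Qed.

Definition encode t := enc (depth t) t.

Lemma encode_enc n t : bounded n t -> encode t = enc n t.
Proof.
move=> bt; rewrite /encode -(enc_stable (@bounded_depth t) (leq_maxr n _)).
by rewrite (enc_stable bt (leq_maxl _ _)).
Qed.

Lemma normal_encode t : normal (encode t).
Proof. exact: normal_enc. Qed.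

Lemma encode_leaf (e : S) : encode (leaf e) = Leaf e.
Proof.
rewrite (@encode_enc 1) /= /root_letter; last by move=> w; rewrite inE => /eqP ->.
case: pickP => [e'|/(_ e)]; first by rewrite inE => /eqP[->].
by rewrite inE eqxx.
Qed.

Lemma encode_star t t' : encode (star t t') = node (encode t) (encode t').
Proof.
set n := maxn (depth t) (depth t').
have bt : bounded n t := bounded_leq (leq_maxl _ _) (@bounded_depth t).
have bt' : bounded n t' := bounded_leq (leq_maxr _ _) (@bounded_depth t').
rewrite (encode_enc bt) (encode_enc bt') (@encode_enc n.+1) /=.
  rewrite /root_letter !branch_star; case: pickP => [e|//].
  by rewrite in_fsetU !mem_pre.
move=> -[[|c x] e]; rewrite /= in_fsetU !mem_pre // => /orP[]/andP[_] => [/bt|/bt'] //.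
Qed.

Lemma tree_val_inj : injective (@Defs.tval S).
Proof. by move=> [u tu] [v tv] /= E; subst v; congr Tree; apply: bool_irrelevance. Qed.

Lemma encode_inj : injective encode.
Proof.
move=> t t'; set n := maxn (depth t) (depth t').
have bt : bounded n t := bounded_leq (leq_maxl _ _) (@bounded_depth t).
have bt' : bounded n t' := bounded_leq (leq_maxr _ _) (@bounded_depth t').
rewrite (encode_enc bt) (encode_enc bt') => E; apply: tree_val_inj.
exact: enc_inj (tvalP t) (tvalP t') bt bt' E.
Qed.

End Encoding.

Lemma interp_encode_congruence (S : finType) (z : term S) op : op z z = z ->
  congruence (fun t t' : tree S => interp z op (encode t) = interp z op (encode t')).
Proof.
move=> idem; split=> // [t1 t2 t3 -> -> // | t1 t1' t2 t2' E1 E2].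
by rewrite !encode_star !interp_node // E1 E2.
Qed.

Lemma cong_preserving_agree (S : finType) (R : tree S -> tree S -> Prop) f g t u :
  congruence R -> cong_preserving f -> cong_preserving g -> f u = g u ->
  R t u -> R (f t) (g t).
Proof.
move=> cR cf cg fg tu; have [_ symR transR _] := cR.
by apply: transR (cf R cR _ _ tu) _; rewrite fg; apply: symR (cg R cR _ _ tu).
Qed.

Theorem mainTheorem4 (S : finType) (hS : 3 <= #|S|) (f g : tree S -> tree S) :
  cong_preserving f -> cong_preserving g ->
  (forall a : S, f (leaf a) = g (leaf a)) ->
  forall t : tree S, f t = g t.
Proof.
move=> cf cg fg t.
(* Two distinct letters suffice for this argument. *)
have /card_gt1P[c [d [_ _ cd]]] : 1 < #|S| by apply: leq_trans hS.
have [/= |nlt] := boolP (is_leaf (encode t)).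
  by case Et: (encode t) => [e||] //; rewrite -(encode_leaf e) in Et; rewrite (encode_inj Et).
have [z1 [op1 [idem1 inj1 mono1 hit1]]] := exists_marking c (normal_encode t) nlt.
have [z2 [op2 [idem2 inj2 mono2 hit2]]] := exists_marking d (normal_encode t) nlt.
have agree z op e : op z z = z -> interp z op (encode t) = Leaf e ->
    interp z op (encode (f t)) = interp z op (encode (g t)).
  move=> idem hit; apply: cong_preserving_agree (interp_encode_congruence idem) cf cg (fg e) _.
  by rewrite hit encode_leaf.
apply: encode_inj; apply: (interp_joint_inj cd idem1 idem2 inj1 inj2 mono1 mono2);
  by [apply: normal_encode | apply: agree hit1 | apply: agree hit2].
Qed.
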